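(* Let $G$ be a graph with edge set $E$, $k\ge1$, suppose $M_k(G)$ is a connected matroid, let $B$ be a base of $M_k(G)$ and $e\in B$, and let $A$ be the component of $G\langle B\rangle$ containing $e$. Suppose $A$ has exactly one cycle and $e$ lies on that cycle (i.e. $e\in E(\lfloor A\rfloor)$). Then $A\setminus e$ is a tree and the fundamental cocircuit $K(e,B)$ equals $\{e\}\cup\{u\in E\setminus B: u\text{ has at least one end-vertex in } V(A)\}$.
   Context: Graphs are finite, may have loops and parallel edges, and have no isolated vertices; $A\setminus e$ deletes the edge $e$ and keeps all vertices. A leaf is a vertex incident to exactly one edge, which is not a loop. For $X\subseteq E$, $G\langle X\rangle$ is the subgraph with edge set $X$ and vertex set the vertices incident to $X$. For $k\ge0$, $M_k(G)$ is the matroid on $E$ whose circuits are the inclusion-minimal members of $\{C\subseteq E:C\neq\emptyset,\ |C|=|V(G\langle C\rangle)|+k\}$. A matroid is connected if its ground set has at least two elements and every two elements lie in a common circuit. For a base $B$ and $e\in B$, $K(e,B)$ is the unique cocircuit $K$ with $K\cap B=\{e\}$. For a connected graph $A$ containing a cycle, its kernel $\lfloor A\rfloor$ is the subgraph obtained by repeatedly deleting leaves (with their incident edges) until no leaf remains. *)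

(* A graph is given by finite types V (vertices) and E (edges)
   and an endpoint map ends : E -> V * V; loops (ends x = (v,v)) and parallel
   edges are allowed. *)
From mathcomp Require Import all_boot.
Set Implicit Arguments. Unset Strict Implicit. Unset Printing Implicit Defensive.

Section Graphs.
Variables (V E : finType) (ends : E -> V * V).

Definition endv (x : E) : {set V} := [set (ends x).1; (ends x).2].

Definition no_isolated : Prop := forall v : V, exists x : E, v \in endv x.

Definition VX (X : {set E}) : {set V} := \bigcup_(x in X) endv x.

Definition vadj (X : {set E}) : rel V :=
  fun u w => [exists x in X, (ends x == (u, w)) || (ends x == (w, u))].

Definition gconnected (W : {set V}) (X : {set E}) : bool :=
  [forall u in W, forall w in W, connect (vadj X) u w].

(* degree of v in the subgraph with edges X (a loop counts twice) *)
Definition deg (X : {set E}) (v : V) : nat :=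
  #|[set x in X | (ends x).1 == v]| + #|[set x in X | (ends x).2 == v]|.

Definition is_cycle (C : {set E}) : bool :=
  [&& C != set0, gconnected (VX C) C & [forall v in VX C, deg C v == 2]].

Definition is_tree (W : {set V}) (X : {set E}) : bool :=
  [&& VX X \subset W, gconnected W X &
      [forall C : {set E}, (C \subset X) ==> ~~ is_cycle C]].

Definition comp_edges (B : {set E}) (e : E) : {set E} :=
  [set f in B | connect (vadj B) (ends e).1 (ends f).1].

(* The matroid M_k(G) on E, given by its circuits *)
Definition circ0 (k : nat) (C : {set E}) : bool :=
  (C != set0) && (#|C| == #|VX C| + k).
Definition circuit (k : nat) (C : {set E}) : bool :=
  circ0 k C && [forall C' : {set E}, (C' \proper C) ==> ~~ circ0 k C'].
Definition indep (k : nat) (I : {set E}) : bool :=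
  [forall C : {set E}, circuit k C ==> ~~ (C \subset I)].
Definition base (k : nat) (B : {set E}) : bool :=
  indep k B && [forall I : {set E}, indep k I ==> ~~ (B \proper I)].
Definition meets_all_bases (k : nat) (D : {set E}) : bool :=
  (D != set0) && [forall B : {set E}, base k B ==> (D :&: B != set0)].
Definition cocircuit (k : nat) (D : {set E}) : bool :=
  meets_all_bases k D &&
  [forall D' : {set E}, (D' \proper D) ==> ~~ meets_all_bases k D'].
Definition mconnected (k : nat) : Prop :=
  1 < #|E| /\ forall x y : E, exists C : {set E}, [&& circuit k C, x \in C & y \in C].

End Graphs.

From Pilot Require Import Defs.
From mathcomp Require Import all_boot zify.

(* Independence in M_k(G) is the count condition #|X| < #|V(X)| + k for all
   subsets X (a set is "sparse").  Since A is a component of G<B> with a unique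
   cycle through e, every subset of A has at most as many edges as vertices,
   A :\ e is a forest, and it stays connected because the cycle bypasses e.
   For u outside B touching V(A), B - e + u is again a base: a subset gains
   the vertex where u meets the forest A - e, and a sparse proper superset
   would contain u, another edge f and T - e for a tight T ⊆ B spanning u and
   f and containing the cycle, i.e. #|T| + 1 edges on at most #|V(T)|
   vertices.  Conversely every base meets S, since the edges of A are
   vertex-disjoint from the other edges of a base avoiding S. *)

Set Implicit Arguments. Unset Strict Implicit. Unset Printing Implicit Defensive.

Section Graph.
Variables (V E : finType) (ends : E -> V * V).
Local Notation VX := (VX ends).
Local Notation endv := (endv ends).
Local Notation deg := (deg ends).

Lemma in_endv v x : (v \in endv x) = ((ends x).1 == v) || ((ends x).2 == v).
Proof. by rewrite /Defs.endv !inE ![v == _]eq_sym. Qed.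

Lemma endv1 x : (ends x).1 \in endv x. Proof. by rewrite in_endv eqxx. Qed.
Lemma endv2 x : (ends x).2 \in endv x. Proof. by rewrite in_endv eqxx orbT. Qed.

Lemma VXP v (X : {set E}) : reflect (exists2 x, x \in X & v \in endv x) (v \in VX X).
Proof. exact: bigcupP. Qed.

Lemma VX_set0 : VX set0 = set0.
Proof. exact: big_set0. Qed.

Lemma VX_setU (X Y : {set E}) : VX (X :|: Y) = VX X :|: VX Y.
Proof. exact: bigcup_setU. Qed.

Lemma VX_setU1 x (X : {set E}) : VX (x |: X) = endv x :|: VX X.
Proof. by rewrite VX_setU /Defs.VX big_set1. Qed.

Lemma VXS (X Y : {set E}) : X \subset Y -> VX X \subset VX Y.
Proof. by move=> XY; apply/bigcupsP=> x /(subsetP XY); apply: bigcup_sup. Qed.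

Lemma leq_card_VX (X Y : {set E}) : X \subset Y -> #|VX X| <= #|VX Y|.
Proof. by move/VXS/subset_leq_card. Qed.

Lemma endv_sub_VX x (X : {set E}) : x \in X -> endv x \subset VX X.
Proof. exact: bigcup_sup. Qed.

Lemma card_VX_gt0 (X : {set E}) : X != set0 -> 0 < #|VX X|.
Proof.
case/set0Pn=> x xX; apply/card_gt0P; exists (ends x).1.
exact: subsetP (endv_sub_VX xX) _ (endv1 x).
Qed.

Lemma card_VX_submod (X Y : {set E}) :
  #|VX (X :|: Y)| + #|VX (X :&: Y)| <= #|VX X| + #|VX Y|.
Proof.
rewrite -[#|VX X| + _]cardsUI VX_setU leq_add2l subset_leq_card //.
by rewrite subsetI !VXS ?subsetIl ?subsetIr.
Qed.

Lemma VX_disjoint (X : {set E}) (W : {set V}) :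
  (forall x v, x \in X -> v \in endv x -> v \notin W) -> VX X :&: W = set0.
Proof.
move=> hW; apply/setP=> v; rewrite !inE; apply/negP=> /andP[/VXP[x xX vx] vW].
by move: (hW x v xX vx); rewrite vW.
Qed.

Definition incid (x : E) (v : V) : nat := ((ends x).1 == v) + ((ends x).2 == v).

Lemma incid_gt0 x v : v \in endv x -> 0 < incid x v.
Proof. by rewrite in_endv /incid => /orP[] /eqP->; rewrite eqxx // addn1. Qed.

Lemma incid_eq0 x v : v \notin endv x -> incid x v = 0.
Proof. by rewrite in_endv /incid negb_or => /andP[/negPf-> /negPf->]. Qed.

Lemma deg_incid (Z : {set E}) v : deg Z v = \sum_(x in Z) incid x v.
Proof.
rewrite /Defs.deg /incid big_split /= -!sum1_card.
by congr (_ + _); rewrite [RHS]big_mkcond [LHS]big_mkcond /=;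
  apply: eq_bigr => x _; rewrite !inE; case: (x \in Z); case: eqP.
Qed.

Lemma sum_incid x (K : {set V}) :
  \sum_(v in K) incid x v = ((ends x).1 \in K) + ((ends x).2 \in K).
Proof.
have sum_eq y : \sum_(v in K) (y == v : nat) = (y \in K).
  case yK: (y \in K); last first.
    by rewrite big1 // => v vK; case: eqP => // yv; rewrite yv vK in yK.
  rewrite (bigD1 y) //= eqxx big1 // => v /andP[_ vy].
  by rewrite eq_sym (negPf vy).
by rewrite big_split /= !sum_eq.
Qed.

Lemma handshake (Z : {set E}) : \sum_(v in VX Z) deg Z v = 2 * #|Z|.
Proof.
under eq_bigr do rewrite deg_incid.
rewrite exchange_big /= -sum1_card big_distrr /=; apply: eq_bigr => x xZ.
by rewrite sum_incid muln1 !(subsetP (endv_sub_VX xZ)) ?endv1 ?endv2.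
Qed.

Lemma leq_incid_deg (Z : {set E}) x v : x \in Z -> incid x v <= deg Z v.
Proof. by move=> xZ; rewrite deg_incid (bigD1 x) //= leq_addr. Qed.

Lemma leq_incid2_deg (Z : {set E}) x y v : x \in Z -> y \in Z -> x != y ->
  incid x v + incid y v <= deg Z v.
Proof.
move=> xZ yZ xy; rewrite deg_incid (bigD1 x) //= leq_add2l (bigD1 y) /= ?leq_addr //.
by rewrite yZ eq_sym xy.
Qed.

Lemma degD1 (Z : {set E}) x v : x \in Z -> deg Z v = incid x v + deg (Z :\ x) v.
Proof.
move=> xZ; rewrite !deg_incid (bigD1 x) //=; congr (_ + _).
by apply: eq_bigl => y; rewrite in_setD1 andbC.
Qed.

Local Notation vadj := (vadj ends).

Lemma vadj_sym (X : {set E}) : symmetric (vadj X).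
Proof.
by move=> u w; apply/exists_inP/exists_inP=> -[x xX h]; exists x; rewrite // orbC.
Qed.

Lemma vadj_edge (X : {set E}) x : x \in X -> vadj X (ends x).1 (ends x).2.
Proof. by move=> xX; apply/exists_inP; exists x; rewrite // -surjective_pairing eqxx. Qed.

Lemma vadjP (X : {set E}) u w : vadj X u w ->
  exists2 x, x \in X & ((ends x).1 = u /\ (ends x).2 = w) \/ ((ends x).1 = w /\ (ends x).2 = u).
Proof. by case/exists_inP=> x xX /orP[] /eqP h; exists x; rewrite // h; [left|right]. Qed.

Lemma connect_vadjS (X Y : {set E}) u w :
  X \subset Y -> connect (vadj X) u w -> connect (vadj Y) u w.
Proof.
move=> XY; apply: connect_sub => x y /exists_inP[z zX h]; apply: connect1.
by apply/exists_inP; exists z; rewrite ?(subsetP XY).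
Qed.

Lemma connect_ends (X : {set E}) u x : x \in X ->
  connect (vadj X) u (ends x).1 = connect (vadj X) u (ends x).2.
Proof.
move=> xX; apply/idP/idP=> /connect_trans; apply; apply: connect1.
  exact: vadj_edge.
by rewrite vadj_sym; apply: vadj_edge.
Qed.

Lemma connect_endv (X : {set E}) u x v : x \in X -> v \in endv x ->
  connect (vadj X) u v = connect (vadj X) u (ends x).1.
Proof. by move=> xX; rewrite in_endv => /orP[] /eqP<- //; rewrite connect_ends. Qed.

Lemma connect_VX (X : {set E}) a x : connect (vadj X) a x -> x = a \/ x \in VX X.
Proof.
case/connectP=> p; elim/last_ind: p x => [|p y _] x; first by move=> _ ->; left.
rewrite rcons_path last_rcons => /andP[_ /vadjP[z zX h]] ->; right.
apply/VXP; exists z => //.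
by case: h => -[h1 h2]; [rewrite -h2 endv2 | rewrite -h1 endv1].
Qed.

Definition mindeg2 (Z : {set E}) : bool :=
  (Z != set0) && [forall v in VX Z, 1 < deg Z v].

(* Deleting an edge at a vertex of degree at most one also deletes that
   vertex, so #|VX Z| <= #|Z| is preserved until the minimum degree is two. *)
Lemma mindeg2_sub (Z : {set E}) : Z != set0 -> #|VX Z| <= #|Z| ->
  exists2 Y : {set E}, Y \subset Z & mindeg2 Y.
Proof.
move: {2}#|Z| (erefl #|Z|) => n; elim: n Z => [|n IH] Z cZ Z0 dZ.
  by move: Z0; rewrite -cards_eq0 cZ.
have [mZ|] := boolP (mindeg2 Z); first by exists Z.
rewrite {1}/mindeg2 Z0 => /forall_inPn[v vZ]; rewrite -leqNgt => dv.
case/VXP: (vZ) => g gZ vg.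
have ig := incid_gt0 vg; have igZ := leq_incid_deg v gZ.
have v_pend : v \notin VX (Z :\ g).
  apply/negP=> /VXP[h /setD1P[hg hZ] vh].
  rewrite eq_sym in hg.
  by have := leq_incid2_deg v gZ hZ hg; have := incid_gt0 vh; lia.
have cZg := cardsD1 g Z; rewrite gZ in cZg.
have Zg0 : Z :\ g != set0.
  apply: contraTneq dv => Zg0; rewrite -ltnNge.
  move: cZg; rewrite Zg0 cards0 add1n => cZ1.
  have : #|endv g| <= 1 by apply: leq_trans (subset_leq_card (endv_sub_VX gZ)) _; lia.
  rewrite /Defs.endv cards2 ltnS leqn0 eqb0 negbK => /eqP e12.
  move: vg igZ; rewrite in_endv e12 orbb /incid => /eqP <-; rewrite e12 eqxx; lia.
have VXg : VX (Z :\ g) \subset VX Z :\ v.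
  apply/subsetP=> w wZ; rewrite in_setD1 (subsetP (VXS (subD1set Z g))) // andbT.
  by apply: contraNneq v_pend => <-.
have := subset_leq_card VXg; have := cardsD1 v (VX Z); rewrite vZ => cVX cVXg.
have [||Y YZ mY] := IH (Z :\ g) _ Zg0; [lia | lia |].
by exists Y => //; apply: subset_trans YZ (subD1set _ _).
Qed.

(* By the handshake lemma a vertex of degree three would give #|VX M| < #|M|;
   then M minus any edge still contains an edge set of minimum degree two. *)
Lemma minset_mindeg2_deg (M : {set E}) : minset mindeg2 M ->
  forall v, v \in VX M -> deg M v = 2.
Proof.
move=> /minsetP[/andP[M0 /forall_inP dM] minM] v vM.
apply/eqP; rewrite eqn_leq dM // andbT leqNgt; apply/negP => dv.
have sum_deg : \sum_(w in VX M) deg M w =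
    \sum_(w in VX M) 2 + \sum_(w in VX M) (deg M w - 2).
  by rewrite -big_split /=; apply: eq_bigr => w wM; rewrite subnKC ?dM.
move: sum_deg; rewrite handshake sum_nat_const (bigD1 v) //= => sum_deg.
have := card_VX_gt0 M0; case/set0Pn: (M0) => g gM.
have := cardsD1 g M; rewrite gM => cM VM.
have Mg0 : M :\ g != set0 by rewrite -cards_eq0; lia.
have [|Y YM mY] := mindeg2_sub Mg0.
  by apply: leq_trans (leq_card_VX (subD1set M g)) _; lia.
have YgM : Y \subset M by apply: subset_trans YM (subD1set M g).
by move: (subsetP YM g); rewrite (minM Y mY YgM) gM !inE eqxx => /(_ isT).
Qed.

(* The edges reachable from one vertex already have minimum degree two. *)
Lemma minset_mindeg2_connected (M : {set E}) : minset mindeg2 M ->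
  gconnected ends (VX M) M.
Proof.
move=> minM; case/minsetP: (minM) => /andP[_ /forall_inP dM] eqM.
apply/forall_inP=> u uM; apply/forall_inP=> w wM.
pose K := [set x | connect (vadj M) u x].
pose MK := [set x in M | (ends x).1 \in K].
have MKM : MK \subset M by apply/subsetP=> x; rewrite inE => /andP[].
have MK_endv x v : x \in MK -> v \in endv x -> v \in K.
  by rewrite [v \in K]inE => /setIdP[xM]; rewrite inE => xK vx; rewrite (connect_endv _ xM vx).
have deg_MK v : v \in K -> deg MK v = deg M v.
  move=> vK; rewrite !deg_incid [RHS](bigID (mem MK)) /= [X in _ + X]big1 ?addn0.
    by apply: eq_bigl => x; rewrite andb_idl // => /(subsetP MKM).
  move=> x /andP[xM xMK]; apply: incid_eq0; apply: contra xMK => vx.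
  rewrite inE xM /= inE; move: vK; rewrite inE.
  by move: vx; rewrite in_endv => /orP[] /eqP <- //; rewrite connect_ends.
have MK0 : MK != set0.
  case/VXP: uM => g gM ug; apply/set0Pn; exists g; rewrite inE gM /= inE.
  move: ug; rewrite in_endv => /orP[] /eqP <-; first exact: connect0.
  by rewrite connect_ends // connect0.
have MK_M : MK = M.
  apply: (eqM MK _ MKM); rewrite /mindeg2 MK0; apply/forall_inP=> v /VXP[x xMK vx].
  rewrite deg_MK ?(MK_endv x) //; apply: dM; apply/VXP; exists x => //.
  exact: subsetP MKM _ xMK.
move: wM; rewrite -{1}MK_M => /VXP[x xMK wx].
by have := MK_endv x w xMK wx; rewrite inE.
Qed.

Lemma minset_mindeg2_cycle (M : {set E}) : minset mindeg2 M -> is_cycle ends M.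
Proof.
move=> minM; rewrite /is_cycle minset_mindeg2_connected //.
case/minsetP: (minM) => /andP[-> _] _ /=.
by apply/forall_inP=> v /(minset_mindeg2_deg minM) ->.
Qed.

Lemma dense_cycle_sub (Z : {set E}) : Z != set0 -> #|VX Z| <= #|Z| ->
  exists2 C : {set E}, C \subset Z & is_cycle ends C.
Proof.
move=> Z0 dZ; have [Y YZ mY] := mindeg2_sub Z0 dZ.
have [M minM MY] := minset_exists mY.
by exists M; [apply: subset_trans YZ | apply: minset_mindeg2_cycle].
Qed.

Lemma cycle_card_VX (C : {set E}) : is_cycle ends C -> #|VX C| <= #|C|.
Proof.
case/and3P=> _ _ /forall_inP d2.
have := handshake C; rewrite (eq_bigr (fun=> 2)) ?sum_nat_const; first lia.
by move=> v vC; apply/eqP; apply: d2.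
Qed.

(* If the ends of e were separated in C :\ e, the component K of one end
   would have odd total degree in C :\ e. *)
Lemma cycle_connectD1 (C : {set E}) e : is_cycle ends C -> e \in C ->
  connect (vadj (C :\ e)) (ends e).1 (ends e).2.
Proof.
move=> cC eC; case/and3P: (cC) => _ _ /forall_inP d2.
set a := (ends e).1; set b := (ends e).2.
apply/negPn/negP=> nab.
pose K := [set x | connect (vadj (C :\ e)) a x].
have aK : a \in K by rewrite inE connect0.
have bK : b \notin K by rewrite inE.
have KC x : x \in K -> x \in VX C.
  rewrite inE => /connect_VX[->|]; first exact: subsetP (endv_sub_VX eC) _ (endv1 e).
  exact: subsetP (VXS (subD1set C e)) x.
have sum2 : \sum_(x in K) deg C x = 2 * #|K|.
  rewrite (eq_bigr (fun=> 2)) ?sum_nat_const ?(mulnC 2) // => x xK.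
  by apply/eqP; apply/d2/KC.
have sum1 : \sum_(x in K) deg C x = \sum_(x in K) deg (C :\ e) x + 1.
  rewrite (eq_bigr (fun x => incid e x + deg (C :\ e) x)) => [|x _]; last exact: degD1.
  by rewrite big_split /= sum_incid -/a -/b aK (negPf bK) addnC.
have sum_even : \sum_(x in K) deg (C :\ e) x = 2 * \sum_(g in C :\ e) ((ends g).1 \in K).
  under eq_bigr do rewrite deg_incid.
  rewrite exchange_big /= big_distrr /=; apply: eq_bigr => g gC.
  by rewrite sum_incid !inE connect_ends //; lia.
lia.
Qed.

Section UnicyclicComponent.
Variables (B : {set E}) (e : E).
Local Notation A := (comp_edges ends B e).

Definition fundamental_set : {set E} := e |: [set u | (u \notin B) &&
  (((ends u).1 \in VX A) || ((ends u).2 \in VX A))].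
Local Notation S := fundamental_set.

Lemma in_comp_edges f : (f \in A) = (f \in B) && connect (vadj B) (ends e).1 (ends f).1.
Proof. by rewrite inE. Qed.

Lemma comp_edges_sub : A \subset B.
Proof. by apply/subsetP=> f; rewrite in_comp_edges => /andP[]. Qed.

Lemma comp_connect_VX v : v \in VX A -> connect (vadj B) (ends e).1 v.
Proof.
case/VXP=> f fA vf; move: (fA); rewrite in_comp_edges => /andP[fB].
by rewrite (connect_endv _ fB vf).
Qed.

Lemma comp_VX_disjoint f v : f \in B -> f \notin A -> v \in endv f -> v \notin VX A.
Proof.
move=> fB fA vf; apply: contra fA => /comp_connect_VX ev.
by rewrite in_comp_edges fB -(connect_endv _ fB vf).
Qed.

Lemma fundamental_setP u : u \in S -> u != e ->
  u \notin B /\ exists2 v, v \in endv u & v \in VX A.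
Proof.
case/setU1P=> [->|]; first by rewrite eqxx.
rewrite inE => /andP[uB /orP[uA|uA]] _; split=> //.
  by exists (ends u).1; rewrite ?endv1.
by exists (ends u).2; rewrite ?endv2.
Qed.

Variable C : {set E}.
Hypothesis eC : e \in C.
Hypothesis C_uniq : forall C' : {set E}, C' \subset A -> is_cycle ends C' -> C' = C.

Lemma compD1_forest (Z : {set E}) : Z \subset A :\ e -> Z != set0 -> #|Z| < #|VX Z|.
Proof.
move=> ZA Z0; rewrite ltnNge; apply/negP=> /(dense_cycle_sub Z0)[C' C'Z cC'].
have C'A : C' \subset A :\ e := subset_trans C'Z ZA.
have := subsetP C'A e; rewrite (C_uniq (subset_trans C'A (subD1set A e)) cC') eC.
by rewrite !inE eqxx => /(_ isT).
Qed.

Lemma comp_card_VX (Z : {set E}) : Z \subset A -> #|Z| <= #|VX Z|.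
Proof.
move=> ZA; have := cardsD1 e Z; have := leq_card_VX (subD1set Z e).
have [Ze0|Ze0] := eqVneq (Z :\ e) set0.
  have [->|Z0] := eqVneq Z set0; first by rewrite cards0.
  by rewrite Ze0 cards0; have := card_VX_gt0 Z0; case: (e \in Z); lia.
by have := compD1_forest (setSD _ ZA) Ze0; case: (e \in Z); lia.
Qed.

Hypotheses (CA : C \subset A) (cC : is_cycle ends C).

(* The edge e itself is bypassed along the cycle C. *)
Lemma compD1_connect_ends f : f \in A -> connect (vadj (A :\ e)) (ends f).1 (ends f).2.
Proof.
move=> fA; have [->|fe] := eqVneq f e.
  by apply: connect_vadjS (cycle_connectD1 cC eC); apply: setSD.
by apply/connect1/vadj_edge; rewrite in_setD1 fe.
Qed.

Lemma compD1_connected : gconnected ends (VX A) (A :\ e).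
Proof.
have csym := sym_connect_sym (vadj_sym (A :\ e)).
pose K := [set x | connect (vadj (A :\ e)) (ends e).1 x].
have AeB : A :\ e \subset B := subset_trans (subD1set A e) comp_edges_sub.
have closedK : closed (vadj B) K.
  suff reachK x y : vadj B x y -> x \in K -> y \in K.
    by move=> x y xy; apply/idP/idP; apply: reachK; rewrite // vadj_sym.
  case/vadjP=> f fB xy; rewrite !inE => ex.
  have fA : f \in A.
    rewrite in_comp_edges fB /=; have := connect_vadjS AeB ex.
    by case: xy => -[h1 h2]; [rewrite h1 | rewrite connect_ends // h2].
  apply: connect_trans ex _; have := compD1_connect_ends fA.
  by case: xy => -[<- <-]; rewrite // csym.
have reach v : v \in VX A -> connect (vadj (A :\ e)) (ends e).1 v.
  move/comp_connect_VX/(closed_connect closedK).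
  by rewrite !inE connect0 => /esym.
apply/forall_inP=> u uA; apply/forall_inP=> w wA.
by apply: connect_trans (reach w wA); rewrite csym reach.
Qed.

Lemma compD1_tree : is_tree ends (VX A) (A :\ e).
Proof.
rewrite /is_tree VXS ?subD1set ?compD1_connected //=.
apply/forallP=> C'; apply/implyP=> C'A; apply/negP=> cC'.
have C'0 : C' != set0 by case/andP: cC'.
by have := compD1_forest C'A C'0; have := cycle_card_VX cC'; lia.
Qed.

Hypothesis eB : e \in B.

Lemma comp_edges_self : e \in A.
Proof. by rewrite in_comp_edges eB connect0. Qed.

Lemma fundamental_setIB : S :&: B = [set e].
Proof.
apply/setP=> x; rewrite !inE; case: eqP => [->|_]; first by rewrite eB.
by case: (x \in B); rewrite ?andbF.
Qed.

End UnicyclicComponent.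

Section CountMatroid.
Variable k : nat.

Definition sparse (I : {set E}) : Prop :=
  forall X : {set E}, X \subset I -> #|X| < #|VX X| + k.

(* For a sparse T this says #|T| = #|VX T| + k - 1. *)
Definition tight (T : {set E}) : bool := #|VX T| + k <= #|T| + 1.

Lemma sparsePn (I : {set E}) : ~ sparse I ->
  exists2 X : {set E}, X \subset I & #|VX X| + k <= #|X|.
Proof.
move=> nsI; have [/exists_inP[X XI dX]|/exists_inPn ndI] :=
  boolP [exists (X : {set E} | X \subset I), #|VX X| + k <= #|X|].
  by exists X.
by case: nsI => X /ndI; rewrite -ltnNge.
Qed.

Lemma tight_span (B : {set E}) g : sparse B -> ~ sparse (g |: B) ->
  exists T : {set E}, [/\ T \subset B, endv g \subset VX T & tight T].
Proof.
move=> sB /sparsePn[X XgB dX].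
have gX : g \in X.
  apply: contraT => gX; suff /sB : X \subset B by lia.
  by apply/subsetP=> x xX; move: (subsetP XgB x xX); rewrite in_setU1;
    case: eqP => [xg|//]; rewrite -xg xX in gX.
have XgB' : X :\ g \subset B.
  by apply/subsetP=> x /setD1P[xg /(subsetP XgB)]; rewrite in_setU1 (negPf xg).
have := cardsD1 g X; rewrite gX => cX.
have VX_X : VX X = endv g :|: VX (X :\ g) by rewrite -VX_setU1 setD1K.
exists (X :\ g); split=> //; last first.
  by rewrite /tight; have := leq_card_VX (subD1set X g); lia.
apply: contraT => /subsetPn[v vg vXg].
have : #|VX (X :\ g)| < #|VX X|.
  rewrite VX_X; apply/proper_card/properP; split; first exact: subsetUr.
  by exists v; rewrite // inE vg.
by have := sB _ XgB'; lia.
Qed.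

Lemma tight_setU (B T1 T2 : {set E}) : sparse B -> T1 \subset B -> T2 \subset B ->
  tight T1 -> tight T2 -> tight (T1 :|: T2).
Proof.
rewrite /tight => sB T1B T2B t1 t2.
have := sB (T1 :&: T2) (subset_trans (subsetIl _ _) T1B).
by have := cardsUI T1 T2; have := card_VX_submod T1 T2; lia.
Qed.

Lemma tight_setU_dense (T D : {set E}) : tight T -> #|VX D| <= #|D| ->
  #|T :&: D| <= #|VX (T :&: D)| -> tight (T :|: D).
Proof.
rewrite /tight => tT dD dTD.
by have := cardsUI T D; have := card_VX_submod T D; lia.
Qed.

Lemma fundamental_cocircuit (B S : {set E}) e : base ends k B ->
  e \in S -> S :&: B = [set e] -> meets_all_bases ends k S ->
  (forall u, u \in S -> u != e -> base ends k (u |: (B :\ e))) ->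
  cocircuit ends k S.
Proof.
move=> hB eS SB mS exch; rewrite /cocircuit mS /=.
apply/forallP=> D; apply/implyP=> /properP[DS [u uS uD]].
have DB x : x \in D -> x \in B -> x = e.
  by move=> xD xB; apply/set1P; rewrite -SB inE xB (subsetP DS).
rewrite /meets_all_bases negb_and; apply/orP; right; apply/forallPn.
have [eD|eD] := boolP (e \in D).
  have ue : u != e by apply: contraNneq uD => ->.
  exists (u |: (B :\ e)); rewrite negb_imply exch //= negbK.
  apply/eqP/setP=> x; rewrite !inE; apply/negP=> /andP[xD /orP[/eqP xu|/andP[xe xB]]].
    by rewrite -xu xD in uD.
  by rewrite (DB x) ?eqxx in xe.
exists B; rewrite negb_imply hB /= negbK.
apply/eqP/setP=> x; rewrite !inE; apply/negP=> /andP[xD xB].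
by rewrite -(DB x) ?xD in eD.
Qed.

Lemma fundamental_cocircuit_uniq (B S K : {set E}) e : meets_all_bases ends k S ->
  (forall u, u \in S -> u != e -> base ends k (u |: (B :\ e))) ->
  cocircuit ends k K -> K :&: B = [set e] -> K = S.
Proof.
move=> mS exch /andP[/andP[_ /forallP mK] minK] KB.
have KeB x : x \in K -> x \in B :\ e -> False.
  by move=> xK /setD1P[xe xB]; move/eqP: xe; apply; apply/set1P; rewrite -KB inE xK.
have SK : S \subset K.
  apply/subsetP=> u uS; have [->|ue] := eqVneq u e.
    by have /setIP[] : e \in K :&: B by rewrite KB set11.
  have /set0Pn[x /setIP[xK]] := implyP (mK _) (exch u uS ue).
  by case/setU1P=> [<- //|/(KeB x xK)].
apply/eqP; rewrite eq_sym eqEproper SK /=; apply: contraT => /negbNE pSK.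
by have := forallP minK S; rewrite pSK mS.
Qed.

Hypothesis k_gt0 : 0 < k.

Lemma dense_circ0_sub (X : {set E}) : #|VX X| + k <= #|X| ->
  exists2 Y : {set E}, Y \subset X & circ0 ends k Y.
Proof.
move: {2}#|X| (erefl #|X|) => n; elim: n X => [|n IH] X cX dX; first lia.
have [eqX|neX] := eqVneq #|X| (#|VX X| + k).
  exists X => //; rewrite /circ0 eqX eqxx andbT -card_gt0; lia.
have /card_gt0P[x xX] : 0 < #|X| by rewrite cX.
have := cardsD1 x X; rewrite xX => cXx.
have [||Y YX cY] := IH (X :\ x); first lia.
  by have := leq_card_VX (subD1set X x); lia.
by exists Y => //; apply: subset_trans YX (subD1set _ _).
Qed.

Lemma minset_circ0_circuit (C : {set E}) : minset (circ0 ends k) C -> circuit ends k C.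
Proof.
case/minsetP=> cC minC; rewrite /circuit cC; apply/forall_inP=> C' pC'.
apply/negP=> /minC/(_ (proper_sub pC')) eqC.
by rewrite eqC properxx in pC'.
Qed.

Lemma indep_sparse (I : {set E}) : indep ends k I <-> sparse I.
Proof.
split=> [/forall_inP indI X XI | sI].
  rewrite ltnNge; apply/negP=> /dense_circ0_sub[Y YX /minset_exists[C minC CY]].
  by move/negP: (indI C (minset_circ0_circuit minC)); apply;
    apply: subset_trans CY (subset_trans YX XI).
apply/forall_inP=> C /andP[/andP[_ /eqP cC] _].
by apply/negP=> /sI; rewrite cC ltnn.
Qed.

Lemma baseP (B : {set E}) : base ends k B <->
  sparse B /\ (forall I : {set E}, sparse I -> ~~ (B \proper I)).
Proof.
split=> [/andP[/indep_sparse sB /forall_inP maxB] | [/indep_sparse iB maxB]].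
  by split=> // I /indep_sparse; apply: maxB.
by rewrite /base iB; apply/forall_inP=> I /indep_sparse; apply: maxB.
Qed.

Lemma base_setU1_dependent (B : {set E}) g : base ends k B -> g \notin B ->
  ~ sparse (g |: B).
Proof.
case/baseP=> _ maxB gB /maxB /negP; apply; apply/properP.
by split; [exact: subsetUr | exists g; rewrite ?setU11].
Qed.

Section Exchange.
Variables (B : {set E}) (e : E) (C : {set E}).
Local Notation A := (comp_edges ends B e).
Local Notation S := (fundamental_set B e).
Hypotheses (eB : e \in B) (CA : C \subset A) (cC : is_cycle ends C) (eC : e \in C).
Hypothesis C_uniq : forall C' : {set E}, C' \subset A -> is_cycle ends C' -> C' = C.

Hypothesis B_base : base ends k B.

Let sB : sparse B. Proof. by case/baseP: B_base. Qed.

Lemma exchange_sparse u : u \in S -> u != e -> sparse (u |: (B :\ e)).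
Proof.
move=> uS ue X XB'; have [uB [v vu vA]] := fundamental_setP uS ue.
have [uX|uX] := boolP (u \in X); last first.
  apply: sB; apply/subsetP=> x xX; move/subsetP: XB' => /(_ x xX).
  by case/setU1P=> [xu|/setD1P[]//]; rewrite -xu xX in uX.
set X0 := X :\ u.
have X0B : X0 \subset B :\ e.
  by apply/subsetP=> x /setD1P[xu /(subsetP XB')]; rewrite in_setU1 (negPf xu).
have XA_sub : X0 :&: A \subset A :\ e.
  by apply/subsetP=> x /setIP[/(subsetP X0B)/setD1P[xe _] xA]; rewrite in_setD1 xe.
have XR_sub : X0 :\: A \subset B.
  by apply/subsetP=> x /setDP[/(subsetP X0B)/setD1P[]].
have cX : #|X| = (#|X0 :&: A| + #|X0 :\: A|).+1.
  by rewrite (cardsD1 u X) uX cardsID add1n.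
have cW : #|X0 :&: A| < #|VX (X0 :&: A) :|: [set v]|.
  have [->|XA0] := eqVneq (X0 :&: A) set0.
    by rewrite VX_set0 set0U cards0 cards1.
  by apply: leq_trans (compD1_forest eC C_uniq XA_sub XA0) (subset_leq_card (subsetUl _ _)).
set W := VX (X0 :&: A) :|: [set v] in cW *.
have WA : W \subset VX A by rewrite subUset sub1set vA VXS ?subsetIr.
have disj : VX (X0 :\: A) :&: W = set0.
  apply: VX_disjoint => x w /setDP[/(subsetP X0B)/setD1P[_ xB] xA] wx.
  exact: contra (subsetP WA w) (comp_VX_disjoint xB xA wx).
have VX_X : #|VX (X0 :\: A)| + #|W| <= #|VX X|.
  rewrite -cardsUI disj cards0 addn0 subset_leq_card // !subUset sub1set.
  rewrite !VXS ?(subset_trans (subsetIl _ _) (subD1set _ _))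
          ?(subset_trans (subsetDl _ _) (subD1set _ _)) //.
  by apply/VXP; exists u.
by have := sB XR_sub; move: cX cW VX_X; clear; lia.
Qed.

Lemma exchange_maximal u (I : {set E}) : u \in S -> u != e -> sparse I ->
  ~~ (u |: (B :\ e) \proper I).
Proof.
move=> uS ue sI; apply/negP=> /properP[B'I [f fI fB']].
have [uB _] := fundamental_setP uS ue.
have uI : u \in I by apply: (subsetP B'I); rewrite setU11.
have [fe|fe] := eqVneq f e.
  case/baseP: B_base => _ /(_ I sI)/negP; apply; apply/properP.
  split; last by exists u.
  apply/subsetP=> x xB; have [->|xe] := eqVneq x e; first by rewrite -fe.
  by apply: (subsetP B'I); rewrite !inE xe xB orbT.
have fB : f \notin B by move: fB'; rewrite !inE fe /= negb_or => /andP[].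
have fu : f != u by apply: contraNneq fB' => ->; rewrite setU11.
have [Tf [TfB fTf tTf]] := tight_span sB (base_setU1_dependent B_base fB).
have [Tu [TuB uTu tTu]] := tight_span sB (base_setU1_dependent B_base uB).
set T := Tf :|: Tu :|: C.
have TB : T \subset B by rewrite !subUset TfB TuB (subset_trans CA (comp_edges_sub _ _)).
have tT : tight T.
  apply: tight_setU_dense (tight_setU sB TfB TuB tTf tTu) (cycle_card_VX cC) _.
  by apply: comp_card_VX eC C_uniq _ _; rewrite subIset ?CA ?orbT.
have eT : e \in T by rewrite !inE eC orbT.
set X := u |: (f |: (T :\ e)).
have XI : X \subset I.
  rewrite !subUset !sub1set uI fI /=; apply: subset_trans B'I.
  by apply/subsetP=> x /setD1P[xe xT]; rewrite !inE xe (subsetP TB) ?orbT.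
have cX : #|X| = #|T| + 1.
  have notTe x : x \notin B -> x \notin T :\ e.
    by move=> xB; apply: contra xB => /setD1P[_ /(subsetP TB)].
  rewrite /X cardsU1 in_setU1 eq_sym (negPf fu) (negPf (notTe u uB)) cardsU1.
  by rewrite (negPf (notTe f fB)) (cardsD1 e T) eT addnC.
have VX_X : VX X \subset VX T.
  rewrite /X !VX_setU1; apply/subUsetP; split; [|apply/subUsetP; split].
  - exact: subset_trans uTu (VXS (subset_trans (subsetUr Tf Tu) (subsetUl _ C))).
  - exact: subset_trans fTf (VXS (subset_trans (subsetUl Tf Tu) (subsetUl _ C))).
  - exact: VXS (subD1set T e).
have := sI X XI; have := subset_leq_card VX_X; move: tT cX; rewrite /tight.
by clear; lia.
Qed.

Lemma exchange_base u : u \in S -> u != e -> base ends k (u |: (B :\ e)).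
Proof.
move=> uS ue; apply/baseP; split; first exact: exchange_sparse.
by move=> I; apply: exchange_maximal.
Qed.

Lemma fundamental_set_meets_bases : meets_all_bases ends k S.
Proof.
apply/andP; split; first by apply/set0Pn; exists e; rewrite setU11.
apply/forall_inP=> B' hB'; apply/negP=> /eqP SB'; have [sB' _] := (baseP B').1 hB'.
have notSB' x : x \in S -> x \in B' -> False.
  move=> xS xB'; have : x \in S :&: B' by rewrite inE xS.
  by rewrite SB' inE.
have eB' : e \notin B' by apply/negP/notSB'; rewrite setU11.
have [X XeB dX] := sparsePn (base_setU1_dependent hB' eB').
have XR_sub : X :\: A \subset B'.
  apply/subsetP=> x /setDP[/(subsetP XeB)/setU1P[->|//]].
  by rewrite comp_edges_self.
have disj : VX (X :\: A) :&: VX (X :&: A) = set0.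
  apply: VX_disjoint => x w xXA wx; have /setDP[xX xA] := xXA.
  apply: contra (subsetP (VXS (subsetIr X A)) w) _.
  have [xB|xB] := boolP (x \in B); first exact: comp_VX_disjoint xB xA wx.
  apply/negP=> wA; apply: (notSB' x); last exact: subsetP XR_sub x xXA.
  apply/setU1P; right; rewrite inE xB /=.
  by move: wx; rewrite in_endv => /orP[] /eqP ->; rewrite wA ?orbT.
have VX_X : VX X = VX (X :\: A) :|: VX (X :&: A) by rewrite -VX_setU setUC setID.
have := cardsUI (VX (X :\: A)) (VX (X :&: A)); rewrite disj cards0 -VX_X.
have := sB' _ XR_sub; have := comp_card_VX eC C_uniq (subsetIr X A).
have := cardsID A X; move: dX; clear; lia.
Qed.

End Exchange.

End CountMatroid.

End Graph.

Theorem mainTheorem19 (V E : finType) (ends : E -> V * V) (k : nat)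
  (hiso : no_isolated ends) (hk : 1 <= k) (hconn : mconnected ends k)
  (B : {set E}) (hB : base ends k B) (e : E) (he : e \in B) :
  let A := comp_edges ends B e in
  (exists C : {set E}, [/\ C \subset A, is_cycle ends C, e \in C &
     forall C' : {set E}, C' \subset A -> is_cycle ends C' -> C' = C]) ->
  is_tree ends (VX ends A) (A :\ e) /\
  (let S := e |: [set u | (u \notin B) &&
               (((ends u).1 \in VX ends A) || ((ends u).2 \in VX ends A))] in
   cocircuit ends k S /\ S :&: B = [set e] /\
   forall K : {set E}, cocircuit ends k K -> K :&: B = [set e] -> K = S).
Proof.
move=> A [C [CA cC eC C_uniq]]; split; first exact: compD1_tree eC C_uniq CA cC.
have SB : fundamental_set ends B e :&: B = [set e] := fundamental_setIB ends he.
have exch := exchange_base hk CA cC eC C_uniq hB.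
have mS := fundamental_set_meets_bases hk he eC C_uniq.
split; first exact: fundamental_cocircuit hB (setU11 _ _) SB mS exch.
by split=> // K cK KB; apply: fundamental_cocircuit_uniq mS exch cK KB.
Qed.
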